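(* Let $p\ge 0$ be an integer, $n=2p+1$, and define $N_p(R)=\sum_{\sigma\in X_{p+1}}W_2(\sigma,R)$ and $D_p(R)=\sum_{\sigma\in X_{p-1}}W_0(\sigma,R)$. Then (1) $N_p(R)$ is a monic polynomial of degree $\frac{(p+1)(p+2)}{2}$ all of whose coefficients (of $R^i$, $0\le i\le\frac{(p+1)(p+2)}{2}$) are positive; (2) $D_p(R)$ is a monic polynomial of degree $\frac{p(p-1)}{2}$ all of whose coefficients are positive; (3) $N_p(0)=n!\,D_p(0)$.
   Context: A Schröder path is a finite directed path in $\mathbb{Z}^2$ each of whose steps is an ascent $(x,y)\to(x+1,y+1)$, a descent $(x,y)\to(x+1,y-1)$, or a flat step $(x,y)\to(x+2,y)$ (the empty path is allowed). Let $P_i=(-i,i)$, $Q_i=(i,i)$. For $k\ge 0$, $X_k$ is the set of collections of $k+1$ pairwise vertex-disjoint Schröder paths from $\{P_i\}_{i=0}^k$ to $\{Q_i\}_{i=0}^k$; $X_{-1}$ consists only of the empty collection. $W_0(\sigma,R)$ is the product over all steps of $\sigma$ of: $1$ per ascent, $R$ per flat step, $y+1$ per descent starting at height $y$. $W_2(\sigma,R)$ is the same but with $y-1$ per descent starting at height $y$. Empty products are $1$. *)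

From HB Require Import structures.
From mathcomp Require Import all_boot all_order all_algebra all_fingroup.
Set Implicit Arguments. Unset Strict Implicit. Unset Printing Implicit Defensive.
Import GRing.Theory Num.Theory.
Local Open Scope ring_scope.

Inductive step := Up | Down | Flat.

Definition step_to (s : step) : 'I_3 :=
  match s with Up => inord 0 | Down => inord 1 | Flat => inord 2 end.
Definition step_of (i : 'I_3) : step :=
  match val i with 0%N => Up | 1%N => Down | _ => Flat end.
Lemma step_toK : cancel step_to step_of.
Proof. by case; rewrite /step_of /= inordK. Qed.
HB.instance Definition _ := Finite.copy step (can_type step_toK).

Definition point := (int * int)%type.

Definition move (v : point) (a : step) : point :=
  match a with
  | Up => (v.1 + 1, v.2 + 1)
  | Down => (v.1 + 1, v.2 - 1)
  | Flat => (v.1 + 2, v.2)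
  end.

Fixpoint vertices (v : point) (s : seq step) : seq point :=
  v :: (if s is a :: s' then vertices (move v a) s' else [::]).

Definition endpoint (v : point) (s : seq step) : point := foldl move v s.

Definition Ppt (i : nat) : point := (- (i%:Z), i%:Z).
Definition Qpt (i : nat) : point := (i%:Z, i%:Z).

(** Weight of a path starting at height [y]: 1 per ascent, R per flat step,
    [d y] per descent starting at height y.  W_0 uses d y = y+1, W_2 uses
    d y = y-1. *)
Fixpoint weight (d : int -> int) (y : int) (s : seq step) : {poly int} :=
  match s with
  | [::] => 1
  | Up :: s' => weight d (y + 1) s'
  | Flat :: s' => 'X * weight d y s'
  | Down :: s' => (d y)%:P * weight d (y - 1) s'
  end.

Definition d0 (y : int) : int := y + 1.
Definition d2 (y : int) : int := y - 1.

(** A collection of m paths: path i starts at P_i (steps sigma i).  Every path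
    from some P_i to some Q_j has at most i+j <= 2m steps, so bounded sequences
    of length <= 2m capture all paths. *)
Definition collection (m : nat) := {ffun 'I_m -> (2 * m).-bseq step}.

Definition path_i (m : nat) (sigma : collection m) (i : 'I_m) : seq step :=
  val (sigma i).

(** sigma is in X_{m-1}: the paths go from {P_i}_{i<m} onto {Q_i}_{i<m}
    (path i ends at Q_{pi i} for a permutation pi) and are pairwise
    vertex-disjoint. *)
Definition in_X (m : nat) (sigma : collection m) : bool :=
  [exists pi : 'S_m,
     [forall i : 'I_m, endpoint (Ppt i) (path_i sigma i) == Qpt (pi i)]]
  && [forall i : 'I_m, forall j : 'I_m, (i != j) ==>
        ~~ has (fun v => v \in vertices (Ppt j) (path_i sigma j))
               (vertices (Ppt i) (path_i sigma i))].

Definition coll_weight (d : int -> int) (m : nat) (sigma : collection m)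
  : {poly int} :=
  \prod_(i < m) weight d (Ppt i).2 (path_i sigma i).

(** Generating sum over X_{m-1} (m = number of paths; m = 0 gives X_{-1}). *)
Definition Xsum (d : int -> int) (m : nat) : {poly int} :=
  \sum_(sigma : collection m | in_X sigma) coll_weight d sigma.

Definition Npoly (p : nat) : {poly int} := Xsum d2 (p + 2).
Definition Dpoly (p : nat) : {poly int} := Xsum d0 p.

(* Both sums have the form sum_sigma c(sigma) R^(number of flat steps of sigma).
   A path from P_i to Q_j has at most (i + j)/2 flat steps, so a collection of
   m paths has at most 0 + 1 + ... + (m-1) = C(m,2) of them, with equality only
   for the purely flat paths, whose weight is R^C(m,2).  The collection without
   flat steps is unique too: path i meets the vertical axis at height 2a_i,
   where a_i <= i counts its ascents among its first i steps, and disjointness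
   forces a_i = i.  Its weight is a product of descent factors, which gives the
   constant terms and their ratio (2p+1)!.  Every coefficient in between is
   positive: a collection of "tents" (i-f ascents, f flat steps, i-f descents)
   realises any number of flat steps with positive weight, and no collection
   has negative weight. *)

From mathcomp Require Import all_boot all_order all_algebra all_fingroup.
From mathcomp Require Import zify.

Set Implicit Arguments.
Unset Strict Implicit.
Unset Printing Implicit Defensive.
Import GRing.Theory Num.Theory.
Local Open Scope ring_scope.

Definition eq_step (a b : step) : bool :=
  match a, b with Up, Up | Down, Down | Flat, Flat => true | _, _ => false end.

Definition ups (s : seq step) : nat := count (eq_step Up) s.
Definition downs (s : seq step) : nat := count (eq_step Down) s.
Definition flats (s : seq step) : nat := count (eq_step Flat) s.

Lemma size_steps s : (ups s + downs s + flats s)%N = size s.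
Proof. by rewrite /ups /downs /flats; elim: s => //= -[] s IH /=; lia. Qed.

Lemma step_counts_take_drop n s :
  [/\ ups s = (ups (take n s) + ups (drop n s))%N,
      downs s = (downs (take n s) + downs (drop n s))%N
    & flats s = (flats (take n s) + flats (drop n s))%N].
Proof. by rewrite /ups /downs /flats -!count_cat !cat_take_drop. Qed.

Lemma count_eq_step_nseq a s : count (eq_step a) s = size s -> s = nseq (size s) a.
Proof.
elim: s => //= b s IH; have := count_size (eq_step a) s.
by case: a b IH => -[] //= IH le_s; try lia; case=> /IH {1}->.
Qed.

Lemma endpointE v s : endpoint v s =
  (v.1 + (ups s + downs s + 2 * flats s)%N%:Z, v.2 + (ups s)%:Z - (downs s)%:Z).
Proof.
rewrite /ups /downs /flats.
elim: s v => [|a s IH] [x y]; first by rewrite /endpoint /=; congr pair; lia.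
by rewrite /endpoint /= -/(endpoint _ s) IH; case: a => /=; congr pair; lia.
Qed.

Lemma mem_vertices_cat v p s1 s2 : v \in vertices p (s1 ++ s2) ->
  v \in vertices p s1 \/ v \in vertices (endpoint p s1) s2.
Proof.
elim: s1 p => [|a s1 IH] p /=; first by right.
rewrite !in_cons => /orP [->|/IH]; first by left.
by case=> [->|]; [left; rewrite orbT | right].
Qed.

Lemma mem_vertices_nseq v p n a : v \in vertices p (nseq n a) ->
  exists2 k, (k <= n)%N & v = endpoint p (nseq k a).
Proof.
elim: n p => [|n IH] p /=; first by rewrite inE => /eqP ->; exists 0%N.
rewrite inE => /orP [/eqP ->|/IH [k le_k ->]]; first by exists 0%N.
by exists k.+1.
Qed.

Lemma mem_vertices_take p s k : endpoint p (take k s) \in vertices p s.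
Proof.
elim: s p k => [|a s IH] p [|k] /=; rewrite ?inE ?eqxx //.
by apply/orP; right; apply: IH.
Qed.

Lemma in_X_step_counts m (sigma : collection m) : in_X sigma ->
  exists pi : 'S_m, forall i,
    (ups (path_i sigma i) + downs (path_i sigma i) + 2 * flats (path_i sigma i)
       = i + pi i)%N
    /\ (ups (path_i sigma i) + i = downs (path_i sigma i) + pi i)%N.
Proof.
case/andP => /existsP [pi /forallP ends] _; exists pi => i.
by move/eqP: (ends i); rewrite endpointE /Ppt /Qpt /= => -[]; lia.
Qed.

Lemma in_X_disjoint m (sigma : collection m) (i j : 'I_m) v : in_X sigma -> i != j ->
  v \in vertices (Ppt i) (path_i sigma i) ->
  v \notin vertices (Ppt j) (path_i sigma j).
Proof.
case/andP => _ /forallP /(_ i) /forallP /(_ j) /implyP disj /disj.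
by move/hasPn; apply.
Qed.

Fixpoint descent_weight (d : int -> int) (y : int) (s : seq step) : int :=
  match s with
  | [::] => 1
  | Up :: s' => descent_weight d (y + 1) s'
  | Flat :: s' => descent_weight d y s'
  | Down :: s' => d y * descent_weight d (y - 1) s'
  end.

Lemma weightE d y s : weight d y s = (descent_weight d y s)%:P * 'X^(flats s).
Proof.
rewrite /flats; elim: s y => [|a s IH] y /=; first by rewrite mulr1.
by case: a => /=; rewrite IH // ?exprS ?polyCM -?mulrA // mulrCA.
Qed.

Lemma descent_weight_nodown d y s : downs s = 0%N -> descent_weight d y s = 1.
Proof. by rewrite /downs; elim: s y => //= -[] s IH y //= /IH. Qed.

Lemma descent_weight_up_flat d y n f s :
  descent_weight d y (nseq n Up ++ nseq f Flat ++ s) = descent_weight d (y + n%:Z) s.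
Proof.
elim: n y => [|n IH] y /=; first by rewrite addr0; elim: f.
by rewrite IH; congr descent_weight; lia.
Qed.

Lemma descent_weight_down d y n :
  descent_weight d y (nseq n Down) = \prod_(k < n) d (y - k%:Z).
Proof.
elim: n y => [|n IH] y /=; first by rewrite big_ord0.
rewrite big_ord_recl IH subr0; congr (_ * _); apply: eq_bigr => k _.
by rewrite lift0; congr d; lia.
Qed.

Definition coll_coef d m (sigma : collection m) : int :=
  \prod_(i < m) descent_weight d (Ppt i).2 (path_i sigma i).
Definition coll_flats m (sigma : collection m) : nat :=
  (\sum_(i < m) flats (path_i sigma i))%N.

Lemma coll_weightE d m (sigma : collection m) :
  coll_weight d sigma = (coll_coef d sigma)%:P * 'X^(coll_flats sigma).
Proof.
rewrite /coll_weight; under eq_bigr do rewrite weightE.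
by rewrite big_split /= -rmorph_prod prodrXr.
Qed.

Lemma coef_Xsum d m k : (Xsum d m)`_k =
  \sum_(sigma : collection m | in_X sigma) coll_coef d sigma * (k == coll_flats sigma)%:R.
Proof.
rewrite /Xsum coef_sum; apply: eq_bigr => sigma _.
by rewrite coll_weightE mul_polyC coefZ coefXn.
Qed.

Lemma sum_ord m : (\sum_(i < m) i)%N = 'C(m, 2).
Proof. by rewrite -bin2_sum big_mkord. Qed.

Lemma sum_ord_inj m (f : 'I_m -> 'I_m) : injective f ->
  (\sum_(i < m) f i)%N = 'C(m, 2).
Proof. by move=> f_inj; rewrite -sum_ord [RHS](reindex_inj f_inj). Qed.

Lemma leq_sum_eq (I : finType) (F G : I -> nat) : (forall i, F i <= G i)%N ->
  (\sum_i F i = \sum_i G i)%N -> forall i, F i = G i.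
Proof.
move=> FG /eqP; have [_ ->] := @leqif_sum I predT _ F G (fun i _ => leqif_eq (FG i)).
by move/forallP=> eqFG i; apply/eqP/eqFG.
Qed.

Lemma ord_inj_leq_id m (f : 'I_m -> nat) : injective f ->
  (forall i : 'I_m, f i <= i)%N -> forall i : 'I_m, f i = i.
Proof.
move=> f_inj f_le; pose g i : 'I_m := insubd i (f i).
have fg i : f i = g i by rewrite insubdK //; exact: leq_ltn_trans (f_le i) _.
apply: (leq_sum_eq f_le); under eq_bigr do rewrite fg; rewrite sum_ord.
by apply: sum_ord_inj => i j /(congr1 val); rewrite /= -!fg => /f_inj.
Qed.

Definition tent (i f : nat) : seq step :=
  nseq (i - f) Up ++ nseq f Flat ++ nseq (i - f) Down.

Definition tents m (fs : nat -> nat) : collection m :=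
  [ffun i : 'I_m => insub_bseq (2 * m) (tent i (fs i))].

Lemma path_tents m (fs : nat -> nat) (i : 'I_m) : (fs i <= i)%N ->
  path_i (tents m fs) i = tent i (fs i).
Proof.
move=> le_fs; rewrite /path_i ffunE /insub_bseq insubdK //.
by rewrite unfold_in /tent !size_cat !size_nseq; have := ltn_ord i; lia.
Qed.

Lemma sum_ord_add_perm m (pi : 'S_m) : (\sum_(i < m) (i + pi i))%N = (2 * 'C(m, 2))%N.
Proof. by rewrite big_split /= sum_ord sum_ord_inj ?mul2n ?addnn //; exact: perm_inj. Qed.

Lemma coll_flats_leq m (sigma : collection m) : in_X sigma ->
  (coll_flats sigma <= 'C(m, 2))%N.
Proof.
case/in_X_step_counts=> pi counts.
have: (\sum_i 2 * flats (path_i sigma i) <= \sum_(i < m) (i + pi i))%N.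
  by apply: leq_sum => i _; have [] := counts i; lia.
by rewrite -big_distrr /= -/(coll_flats sigma) sum_ord_add_perm; lia.
Qed.

Lemma coll_flats_max m (sigma : collection m) : in_X sigma ->
  coll_flats sigma = 'C(m, 2) -> sigma = tents m id.
Proof.
case/in_X_step_counts=> pi counts flats_max.
have flats_eq : forall i, (2 * flats (path_i sigma i) = i + pi i)%N.
  apply: leq_sum_eq => [i|]; first by have [] := counts i; lia.
  by rewrite -big_distrr -/(coll_flats sigma) flats_max sum_ord_add_perm.
apply/ffunP => i; apply: val_inj; change (path_i sigma i = path_i (tents m id) i).
rewrite path_tents // /tent subnn /= cats0.
have [c1 c2] := counts i; have := flats_eq i; have := size_steps (path_i sigma i).
move=> size_s flats_i; have all_flat : flats (path_i sigma i) = size (path_i sigma i) by lia.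
by rewrite (count_eq_step_nseq all_flat); congr nseq; lia.
Qed.

Lemma endpoint_Ppt_noflat i s : flats s = 0%N -> size s = i ->
  endpoint (Ppt i) s = (0, (2 * ups s)%N%:Z).
Proof.
move=> flats0 size_s; have := size_steps s.
by rewrite endpointE /Ppt /= => steps; congr pair; lia.
Qed.

Lemma in_X_noflat_prefix m (sigma : collection m) : in_X sigma ->
  (forall i, flats (path_i sigma i) = 0%N) ->
  forall i : 'I_m, take i (path_i sigma i) = nseq i Up.
Proof.
move=> X flats0; have [pi counts] := in_X_step_counts X.
set s := path_i sigma in counts flats0 *.
have size_take (i : 'I_m) : size (take i (s i)) = i.
  rewrite size_takel // -size_steps; have [] := counts i; lia.
have flats_take (i : 'I_m) : flats (take i (s i)) = 0%N.
  by have [_ _] := step_counts_take_drop i (s i); rewrite flats0; lia.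
pose a (i : 'I_m) := ups (take i (s i)).
have axis_a (i : 'I_m) : endpoint (Ppt i) (take i (s i)) = (0, (2 * a i)%N%:Z).
  exact: endpoint_Ppt_noflat.
have a_inj : injective a.
  move=> i j eq_a; apply/eqP/negPn/negP => neq_ij.
  have := in_X_disjoint X neq_ij (mem_vertices_take _ _ i).
  by rewrite axis_a eq_a -axis_a mem_vertices_take.
have a_le (i : 'I_m) : (a i <= i)%N by rewrite /a -[X in (_ <= X)%N](size_take i) count_size.
move=> i; have all_up : ups (take i (s i)) = size (take i (s i)).
  by rewrite size_take; exact: ord_inj_leq_id a_inj a_le i.
by rewrite (count_eq_step_nseq all_up) size_take.
Qed.

Lemma coll_flats0 m (sigma : collection m) : in_X sigma ->
  coll_flats sigma = 0%N -> sigma = tents m (fun=> 0%N).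
Proof.
move=> X /eqP; rewrite sum_nat_eq0 => /forallP /(_ _) /eqP flats0.
have prefix := in_X_noflat_prefix X flats0.
have [pi counts] := in_X_step_counts X.
set s := path_i sigma in counts flats0 prefix *.
have ups_s (i : 'I_m) : ups (s i) = pi i by have := flats0 i; have [] := counts i; lia.
have le_pi (i : 'I_m) : (i <= pi i)%N.
  rewrite -ups_s; have [-> _ _] := step_counts_take_drop i (s i).
  by rewrite prefix /ups count_nseq /= mul1n leq_addr.
have pi_id (i : 'I_m) : pi i = i.
  have sum_eq : (\sum_(j < m) j = \sum_(j < m) pi j)%N.
    by rewrite sum_ord sum_ord_inj //; exact: perm_inj.
  by apply: val_inj; exact: esym (leq_sum_eq le_pi sum_eq i).
apply/ffunP => i; apply: val_inj; change (s i = path_i (tents m (fun=> 0%N)) i).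
rewrite path_tents // /tent subn0 /= -(cat_take_drop i (s i)) prefix; congr cat.
have ups_take : ups (take i (s i)) = i by rewrite prefix /ups count_nseq mul1n.
have [ups_split _ flats_split] := step_counts_take_drop i (s i).
have [_ balance] := counts i; have := ups_s i; have := flats0 i.
have := size_steps (s i); rewrite pi_id in balance * => size_s f0 u.
have all_down : downs (drop i (s i)) = size (drop i (s i)) by rewrite -size_steps; lia.
by rewrite (count_eq_step_nseq all_down) size_drop; congr nseq; lia.
Qed.

Definition tent_region (i f : nat) (v : point) : Prop :=
  [/\ i%:Z <= v.2, v.2 <= (2 * i - f)%N%:Z, v.1 + v.2 <= (2 * i)%N%:Z,
      v.2 - v.1 <= (2 * i)%N%:Z
    & f = 0%N -> v.1 + v.2 = (2 * i)%N%:Z \/ v.2 - v.1 = (2 * i)%N%:Z].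

Lemma mem_tent_vertices i f v : (f <= i)%N ->
  v \in vertices (Ppt i) (tent i f) -> tent_region i f v.
Proof.
move=> le_fi; rewrite /tent /tent_region.
case/mem_vertices_cat => [/mem_vertices_nseq [k le_k ->]|].
  by rewrite endpointE /ups /downs /flats !count_nseq /Ppt /=; split; lia.
case/mem_vertices_cat => /mem_vertices_nseq [k le_k ->];
by rewrite !endpointE /ups /downs /flats !count_nseq /Ppt /=; split; lia.
Qed.

Lemma tent_regions_disjoint i j f g v : (i < j)%N -> f = i \/ g = 0%N ->
  tent_region i f v -> tent_region j g v -> False.
Proof. by move=> lt_ij [] fg [? ? ? ? ?] [? ? ? ? gv]; [|case: (gv fg)]; lia. Qed.

Section Tents.
Variables (m : nat) (fs : nat -> nat).
Hypothesis fs_le : forall i, (fs i <= i)%N.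

Lemma tents_in_X : (forall i j, (i < j)%N -> fs i = i \/ fs j = 0%N) ->
  in_X (tents m fs).
Proof.
move=> fs_sep; apply/andP; split.
  apply/existsP; exists 1%g; apply/forallP => i; apply/eqP.
  rewrite perm1 path_tents // endpointE /ups /downs /flats /tent !count_cat !count_nseq /Ppt /Qpt /=.
  by move: (fs_le i) => le_i; congr pair; lia.
apply/forallP => i; apply/forallP => j; apply/implyP => neq_ij.
apply/hasPn => v; rewrite !path_tents // => /mem_tent_vertices vi.
apply/negP => /mem_tent_vertices vj.
case: (ltngtP i j) => [lt_ij|lt_ji|/val_inj eq_ij]; last by rewrite eq_ij eqxx in neq_ij.
  exact: tent_regions_disjoint lt_ij (fs_sep _ _ lt_ij) (vi _) (vj _).
exact: tent_regions_disjoint lt_ji (fs_sep _ _ lt_ji) (vj _) (vi _).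
Qed.

Lemma coll_flats_tents : coll_flats (tents m fs) = (\sum_(i < m) fs i)%N.
Proof.
apply: eq_bigr => i _; rewrite path_tents //.
by rewrite /flats /tent !count_cat !count_nseq /=; lia.
Qed.

Lemma coll_coef_tents d : coll_coef d (tents m fs) =
  \prod_(i < m) \prod_(k < i - fs i) d (2 * i - fs i - k)%N%:Z.
Proof.
apply: eq_bigr => i _; rewrite path_tents // /tent descent_weight_up_flat.
rewrite descent_weight_down; apply: eq_bigr => k _; congr d.
by move: (fs_le i) (ltn_ord k); rewrite /Ppt /=; lia.
Qed.

End Tents.

(* The first tents are flat, one is partly flat and the remaining ones are
   triangles, so that every tent lies below the starting point of each later
   tent or strictly inside its triangle. *)
Definition tent_flats (k i : nat) : nat := minn i (k - 'C(i, 2)).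

Lemma tent_flats_le k i : (tent_flats k i <= i)%N.
Proof. exact: geq_minl. Qed.

Lemma tent_flats_sep k i j : (i < j)%N -> tent_flats k i = i \/ tent_flats k j = 0%N.
Proof.
move=> lt_ij; have := leq_bin2l 2 lt_ij; rewrite binS bin1 /tent_flats; lia.
Qed.

Lemma sum_tent_flats k m : (\sum_(i < m) tent_flats k i)%N = minn k 'C(m, 2).
Proof.
elim: m => [|m IH]; first by rewrite big_ord0 bin0n minn0.
by rewrite big_ord_recr /= IH binS bin1 /tent_flats; lia.
Qed.

Section GeneratingSum.
Variables (d : int -> int) (m : nat).

Lemma coef_Xsum_unique (sigma0 : collection m) k :
  in_X sigma0 -> coll_flats sigma0 = k ->
  (forall sigma, in_X sigma -> coll_flats sigma = k -> sigma = sigma0) ->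
  (Xsum d m)`_k = coll_coef d sigma0.
Proof.
move=> X0 flats0 uniq0; rewrite coef_Xsum (bigD1 sigma0) //= flats0 eqxx mulr1.
rewrite big1 ?addr0 // => sigma /andP [X neq]; case: eqP => [eq_k|]; last by rewrite mulr0.
by rewrite (uniq0 sigma X (esym eq_k)) eqxx in neq.
Qed.

Lemma coef_Xsum_gt k : ('C(m, 2) < k)%N -> (Xsum d m)`_k = 0.
Proof.
move=> lt_k; rewrite coef_Xsum big1 // => sigma X.
by have := coll_flats_leq X; case: eqP => [eq_k|]; [lia | rewrite mulr0].
Qed.

Lemma coef_Xsum_top : (Xsum d m)`_('C(m, 2)) = 1.
Proof.
rewrite (@coef_Xsum_unique (tents m id)).
- by rewrite coll_coef_tents //; apply: big1 => i _; rewrite subnn big_ord0.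
- by apply: tents_in_X => // i j; left.
- by rewrite coll_flats_tents // sum_ord.
- by move=> sigma X; apply: coll_flats_max.
Qed.

Lemma size_Xsum : size (Xsum d m) = 'C(m, 2).+1.
Proof.
apply/eqP; rewrite eqn_leq; apply/andP; split.
  by apply/leq_sizeP => j; apply: coef_Xsum_gt.
by rewrite ltnNge; apply/negP => /leq_sizeP/(_ _ (leqnn _))/eqP; rewrite coef_Xsum_top oner_eq0.
Qed.

Lemma Xsum_monic : Xsum d m \is monic.
Proof. by rewrite monicE /lead_coef size_Xsum coef_Xsum_top. Qed.

Lemma Xsum_horner0 :
  (Xsum d m).[0] = \prod_(i < m) \prod_(k < i) d (2 * i - k)%N%:Z.
Proof.
rewrite horner_coef0 (@coef_Xsum_unique (tents m (fun=> 0%N))).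
- by rewrite coll_coef_tents //; apply: eq_bigr => i _; rewrite !subn0.
- by apply: tents_in_X => // i j; right.
- by rewrite coll_flats_tents // big1.
- by move=> sigma X; apply: coll_flats0.
Qed.

Variable c : int.
Hypotheses (d_ge0 : forall y, c <= y -> 0 <= d y) (d_c : d c = 0).

(* A path starting at height >= c can only get below c by a descent from
   height c, whose factor vanishes. *)
Lemma descent_weight_ge0 y s : c <= y -> 0 <= descent_weight d y s.
Proof.
elim: s y => //= -[] s IH y le_cy /=; try by apply: IH; lia.
have [<-|neq_cy] := eqVneq c y; first by rewrite d_c mul0r.
by apply: mulr_ge0; [apply: d_ge0 | apply: IH]; lia.
Qed.

Hypotheses (c_le1 : c <= 1) (d_gt0 : forall y, 2 <= y -> 0 < d y).

Lemma coll_coef_ge0 (sigma : collection m) : in_X sigma -> 0 <= coll_coef d sigma.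
Proof.
case/in_X_step_counts=> pi counts; apply: prodr_ge0 => i _.
have [i0|i_gt0] := posnP i; last by apply: descent_weight_ge0; rewrite /Ppt /=; lia.
by rewrite descent_weight_nodown //; have [] := counts i; rewrite i0; lia.
Qed.

Lemma coef_Xsum_gt0 k : (k <= 'C(m, 2))%N -> 0 < (Xsum d m)`_k.
Proof.
move=> le_k; set sigma0 := tents m (tent_flats k).
have X0 : in_X sigma0 by apply: tents_in_X => [|i j]; [exact: tent_flats_le | exact: tent_flats_sep].
have coef0 : 0 < coll_coef d sigma0.
  rewrite coll_coef_tents; last exact: tent_flats_le.
  apply: prodr_gt0 => i _; apply: prodr_gt0 => j _; apply: d_gt0.
  by move: (ltn_ord j) (tent_flats_le k i); lia.
rewrite coef_Xsum (bigD1 sigma0) //= coll_flats_tents ?sum_tent_flats; last exact: tent_flats_le.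
rewrite (minn_idPl le_k) eqxx mulr1 ltr_pwDl // sumr_ge0 // => sigma /andP [X _].
by rewrite mulr_ge0 ?coll_coef_ge0.
Qed.

End GeneratingSum.

Lemma Dpoly_horner0 p : (Dpoly p).[0] = (\prod_(i < p) (2 * i + 1) ^_ i)%N%:R.
Proof.
rewrite /Dpoly Xsum_horner0 natr_prod; apply: eq_bigr => i _.
rewrite ffact_prod natr_prod; apply: eq_bigr => k _.
by rewrite /d0 natz; have := ltn_ord k; lia.
Qed.

Lemma Npoly_horner0 p :
  (Npoly p).[0] = (\prod_(i < p.+1) ((2 * i + 1) ^_ i * i.+1))%N%:R.
Proof.
rewrite /Npoly Xsum_horner0 addn2 big_ord_recl big_ord0 mul1r natr_prod.
apply: eq_bigr => i _.
have -> : ((2 * i + 1) ^_ i * i.+1 = (2 * i + 1) ^_ i.+1)%N.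
  by rewrite ffactnSr; congr (_ * _); lia.
rewrite lift0 ffact_prod natr_prod; apply: eq_bigr => k _.
by rewrite /d2 natz; have := ltn_ord k; lia.
Qed.

Lemma fact_ord_prod n : n`! = (\prod_(i < n) i.+1)%N.
Proof. by rewrite fact_prod big_add1 /= big_mkord. Qed.

Lemma odd_fact_ffact p :
  (\prod_(i < p.+1) ((2 * i + 1) ^_ i * i.+1))%N
  = ((2 * p + 1)`! * \prod_(i < p) (2 * i + 1) ^_ i)%N.
Proof.
have := @ffact_fact (2 * p + 1) p; rewrite (_ : 2 * p + 1 - p = p.+1)%N; last by lia.
move=> /(_ _)/esym -> ; last by lia.
by rewrite big_split /= -fact_ord_prod big_ord_recr /= -mulnA mulnC.
Qed.

Theorem theorem6p3 (p : nat) :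
  let n := (2 * p + 1)%N in
  [/\ [/\ Npoly p \is monic,
          (size (Npoly p)).-1 = ((p + 1) * (p + 2))./2
        & forall i : nat, (i <= ((p + 1) * (p + 2))./2)%N -> 0 < (Npoly p)`_i],
      [/\ Dpoly p \is monic,
          (size (Dpoly p)).-1 = (p * (p - 1))./2
        & forall i : nat, (i <= (p * (p - 1))./2)%N -> 0 < (Dpoly p)`_i]
    & (Npoly p).[0] = (n`!)%:R * (Dpoly p).[0]].
Proof.
move=> n.
have degN : ((p + 1) * (p + 2))./2 = 'C(p + 2, 2) by rewrite bin2 addn2 mulnC addn1.
have degD : (p * (p - 1))./2 = 'C(p, 2) by rewrite bin2 subn1.
rewrite Npoly_horner0 Dpoly_horner0 odd_fact_ffact natrM degN degD /Npoly /Dpoly.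
split=> //; split; rewrite ?Xsum_monic ?size_Xsum // => i.
- by apply: (@coef_Xsum_gt0 _ _ 1) => [y|||y]; rewrite /d2 //; lia.
- by apply: (@coef_Xsum_gt0 _ _ (-1)) => [y|||y]; rewrite /d0 //; lia.
Qed.
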